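(* $AQ_4$ is fractional strongly maximally matched and fractional strongly super matched; that is, $fsmp(AQ_4)=7$, and for every set $F\subseteq V(AQ_4)\cup E(AQ_4)$ with $|F|=7$ such that $AQ_4-F$ has no fractional perfect matching, the graph $AQ_4-F$ has an isolated vertex.
   Context: The $n$-dimensional augmented cube $AQ_n$ ($n\geq 1$) has vertex set all binary strings $u_1u_2\cdots u_n$. $AQ_1\cong K_2$ on vertices $0,1$. For $n\geq 2$, $AQ_n$ consists of a copy $AQ^0_{n-1}$ of $AQ_{n-1}$ with $0$ prefixed to every label and a copy $AQ^1_{n-1}$ with $1$ prefixed, plus the following edges: $0u_1\cdots u_{n-1}$ is adjacent to $1v_1\cdots v_{n-1}$ iff either $u_i=v_i$ for all $i$ (cross edge) or $u_i\neq v_i$ for all $i$ (complement edge). $AQ_4$ is $7$-regular on $16$ vertices. For $F\subseteq V(G)\cup E(G)$, $G-F$ denotes $G$ with the vertices and edges of $F$ deleted. A fractional perfect matching of $G$ is $f:E(G)\to[0,1]$ with $\sum_{e\ni v}f(e)=1$ for every vertex $v$. A fractional strong matching preclusion (FSMP) set is $F\subseteq V(G)\cup E(G)$ with $G-F$ having no fractional perfect matching; $fsmp(G)$ is the minimum size of an FSMP set, and an FSMP set of that size is optimal. $G$ is fractional strongly maximally matched if $fsmp(G)=\delta(G)$, and fractional strongly super matched if in addition $G-F$ has an isolated vertex for every optimal FSMP set $F$. *)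

From HB Require Import structures.
From mathcomp Require Import all_boot all_order all_algebra.
Set Implicit Arguments. Unset Strict Implicit. Unset Printing Implicit Defensive.
Import Order.TTheory GRing.Theory Num.Theory.

Section Graphs.
Variable T : finType.
Variable e : rel T.   (* adjacency (symmetric, irreflexive) *)

Definition edges : {set {set T}} :=
  [set A : {set T} | [exists u, exists v, (A == [set u; v]) && e u v]].

(* A set F ⊆ V(G) ∪ E(G) is given as a pair (FV, FE), FV ⊆ V, FE ⊆ E. *)
Definition valid_fault (FV : {set T}) (FE : {set {set T}}) : bool :=
  FE \subset edges.
Definition fault_size (FV : {set T}) (FE : {set {set T}}) : nat :=
  #|FV| + #|FE|.

Definition rem_vertices (FV : {set T}) : {set T} := ~: FV.
Definition rem_edges (FV : {set T}) (FE : {set {set T}}) : {set {set T}} :=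
  [set A in edges | (A \notin FE) && [disjoint A & FV]].

Definition has_fpm (R : realFieldType) (V : {set T}) (E : {set {set T}}) : Prop :=
  exists f : {set T} -> R,
    (forall A, A \in E -> 0 <= f A <= 1)%R /\
    (forall v, v \in V -> (\sum_(A in E | v \in A) f A = 1)%R).

Definition is_fsmp_set (R : realFieldType) FV FE : Prop :=
  valid_fault FV FE /\ ~ has_fpm R (rem_vertices FV) (rem_edges FV FE).

Definition fsmp_is (R : realFieldType) (k : nat) : Prop :=
  (exists FV FE, is_fsmp_set R FV FE /\ fault_size FV FE = k) /\
  (forall FV FE, is_fsmp_set R FV FE -> k <= fault_size FV FE).

Definition has_isolated FV FE : Prop :=
  exists v, v \in rem_vertices FV /\
    forall A, A \in rem_edges FV FE -> v \notin A.

End Graphs.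

(* Adjacency of AQ_n on binary strings u_1...u_n (head = prefixed bit u_1).  Base: the single vertex of length 0 has no
   edges, so that AQ_1 = K_2 is recovered. *)
Fixpoint aq_adj (u v : seq bool) : bool :=
  match u, v with
  | a :: u', b :: v' =>
      if a == b then aq_adj u' v' else (u' == v') || (u' == map negb v')
  | _, _ => false
  end.

Definition AQ (n : nat) : rel (n.-tuple bool) :=
  fun u v => aq_adj (val u) (val v).

From HB Require Import structures.
From mathcomp Require Import all_boot all_order all_algebra.
From mathcomp Require Import zify.
Set Implicit Arguments. Unset Strict Implicit. Unset Printing Implicit Defensive.
Import Order.TTheory GRing.Theory Num.Theory.

(** By Hall's theorem applied to the bipartite double cover, a graph has a
  fractional perfect matching iff |N(X)| >= |X| for every vertex set X.  If
  G - F has none, a violating X yields a set I = X \ N(X) whose neighbours in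
  G - F all lie in S = N(X) \ X, with |S| < |I|.  Every edge of AQ_4 inside I,
  and one edge from I to each vertex of the boundary of I outside S, must then
  be in F or have an endpoint in F, so |F| >= e(I) + |boundary I| - |I| + 1.
  An exhaustive check over the 2^16 vertex sets of AQ_4 shows that this is at
  least 8 when |I| >= 2; when |I| = 1 it is the degree 7, and the unique
  vertex of I is isolated in G - F. *)

Section Hall.
Variables A B : finType.
Implicit Types (r : A -> B -> bool) (D X : {set A}) (Y : {set B}).

Definition nbr r X : {set B} := [set y | [exists x in X, r x y]].

Definition hall_condition r D := forall X, X \subset D -> #|X| <= #|nbr r X|.

Definition matching r D (f : A -> B) :=
  {in D, forall x, r x (f x)} /\ {in D &, injective f}.

Definition avoiding r Y x y := r x y && (y \notin Y).

Lemma nbr_mem r X x y : x \in X -> r x y -> y \in nbr r X.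
Proof. by move=> xX rxy; rewrite inE; apply/exists_inP; exists x. Qed.

Lemma nbrU r X1 X2 : nbr r (X1 :|: X2) = nbr r X1 :|: nbr r X2.
Proof.
apply/setP => y; rewrite !inE; apply/exists_inP/orP => [[x]|].
  by rewrite inE => /orP[] xX rxy; [left | right]; apply/exists_inP; exists x.
by case=> /exists_inP[x xX rxy]; exists x; rewrite // inE xX ?orbT.
Qed.

Lemma nbr_avoiding r Y X : nbr (avoiding r Y) X = nbr r X :\: Y.
Proof.
apply/setP => y; rewrite !inE; apply/exists_inP/andP => [[x xX /andP[rxy yY]]|].
  by split=> //; apply/exists_inP; exists x.
by case=> yY /exists_inP[x xX rxy]; exists x; rewrite // /avoiding rxy.
Qed.

Lemma matching0 r f : matching r set0 f.
Proof. by split=> x; rewrite inE. Qed.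

Lemma matching_glue r D1 D2 Y f1 f2 :
  matching r D1 f1 -> {in D1, forall x, f1 x \in Y} ->
  matching (avoiding r Y) D2 f2 ->
  matching r (D1 :|: D2) (fun x => if x \in D1 then f1 x else f2 x).
Proof.
move=> [rf1 injf1] f1Y [rf2 injf2]; split=> [x | x y]; rewrite !inE.
  by case: ifP => [xD1 _ | _ /= /rf2 /andP[]]; first exact: rf1.
have f2Y z : z \in D2 -> f2 z \notin Y by case/rf2/andP.
case: ifP => xD1; case: ifP => yD1 /= xD yD.
- exact: injf1.
- by move=> fxy; move: (f2Y y yD); rewrite -fxy f1Y.
- by move=> fxy; move: (f2Y x xD); rewrite fxy f1Y.
- exact: injf2.
Qed.

Lemma hall_tight r D X0 :
  hall_condition r D -> X0 \subset D -> #|nbr r X0| <= #|X0| ->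
  hall_condition (avoiding r (nbr r X0)) (D :\: X0).
Proof.
move=> hallD sX0D tight X /subsetDP[sXD disX]; rewrite nbr_avoiding.
have := hallD (X :|: X0); rewrite subUset sXD sX0D nbrU => /(_ isT).
rewrite cardsU (disjoint_setI0 disX) cards0 subn0.
have := cardsUI (nbr r X) (nbr r X0); have := cardsID (nbr r X0) (nbr r X).
lia.
Qed.

Lemma hall_surplus r D x0 y0 :
  (forall X, X \subset D -> X != set0 -> X != D -> #|X| < #|nbr r X|) ->
  x0 \in D -> hall_condition (avoiding r [set y0]) (D :\ x0).
Proof.
move=> surplus x0D X /subsetD1P[sXD x0X]; rewrite nbr_avoiding.
have [-> | Xn0] := eqVneq X set0; first by rewrite cards0.
have XnD : X != D by apply: contraNneq x0X => ->.
have := surplus X sXD Xn0 XnD; rewrite (cardsD1 y0 (nbr r X)).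
by case: (y0 \in nbr r X) => /=; lia.
Qed.

(* [b0] is the junk value of [f] outside [D], needed only when [D] is empty. *)
Theorem hall (b0 : B) r D : hall_condition r D -> exists f, matching r D f.
Proof.
move: {2}#|D| (leqnn #|D|) => n; elim: n r D => [|n IH] r D leDn hallD.
  by exists (fun=> b0); move: leDn; rewrite leqn0 cards_eq0 => /eqP->; apply: matching0.
have [-> | /set0Pn[x0 x0D]] := eqVneq D set0; first by exists (fun=> b0); apply: matching0.
have [X0 /and4P[sX0D X0n0 X0nD tight] | surplus] :=
  pickP [pred X : {set A} | [&& X \subset D, X != set0, X != D & #|nbr r X| <= #|X|]].
  have ltX0D : #|X0| < #|D| by rewrite proper_card // properEneq X0nD.
  have [f1 mf1] := IH r X0 (ltac:(lia)) (fun X sX => hallD X (subset_trans sX sX0D)).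
  have [f2 mf2] : exists f2, matching (avoiding r (nbr r X0)) (D :\: X0) f2.
    apply: IH (hall_tight hallD sX0D tight).
    by rewrite cardsDS //; move: X0n0; rewrite -card_gt0; lia.
  have f1N x : x \in X0 -> f1 x \in nbr r X0 by move=> xX0; rewrite (nbr_mem xX0) ?mf1.1.
  eexists; rewrite -(setID D X0) (setIidPr sX0D); exact: matching_glue mf1 f1N mf2.
have [y0 y0N] : exists y0, y0 \in nbr r [set x0].
  by apply/set0Pn; rewrite -card_gt0 (leq_trans _ (hallD _ _)) ?cards1 ?sub1set.
have rx0y0 : r x0 y0 by move: y0N; rewrite inE => /exists_inP[x /set1P->].
have [f2 mf2] : exists f2, matching (avoiding r [set y0]) (D :\ x0) f2.
  apply: IH; last apply: hall_surplus x0D => X sXD Xn0 XnD.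
    by move: leDn; rewrite (cardsD1 x0 D) x0D.
  by rewrite ltnNge; apply: contraFN (surplus X) => le; rewrite /= sXD Xn0 XnD.
have mf1 : matching r [set x0] (fun=> y0).
  by split=> [x /set1P-> | x y /set1P-> /set1P->].
eexists; rewrite -(setD1K x0D); apply: matching_glue mf1 _ mf2 => x _; exact: set11.
Qed.

End Hall.

Lemma eq_set2 (T : finType) (x y u w : T) :
  [set x; y] = [set u; w] -> (x = u /\ y = w) \/ (x = w /\ y = u).
Proof.
move=> E.
have /set2P[] : x \in [set u; w] by rewrite -E set21.
all: have /set2P[] : y \in [set u; w] by rewrite -E set22.
all: have /set2P[] : w \in [set x; y] by rewrite E set22.
all: have /set2P[] : u \in [set x; y] by rewrite E set21.
all: by move=> *; subst; auto.
Qed.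

Lemma card_pairs_through (T : finType) (D : {set T}) (s : T -> T) v :
  {in D, forall x, s x \in D} -> {in D &, injective s} -> {in D, forall x, s x != x} ->
  v \in D -> #|[set x in D | v \in [set x; s x]]| = 2.
Proof.
move=> sD inj_s s_neq vD.
have [w wD swv] : exists2 w, w \in D & s w = v.
  have sDD : s @: D = D.
    apply/eqP; rewrite eqEcard card_in_imset // leqnn andbT.
    by apply/subsetP => _ /imsetP[x xD ->]; exact: sD.
  by move: vD; rewrite -{1}sDD => /imsetP[w wD ->]; exists w.
have vw : v != w by apply: contraTneq (s_neq w wD) => vw; rewrite swv vw eqxx.
rewrite (_ : [set x in D | _] = [set v; w]) ?cards2 ?vw //.
apply/setP => x; rewrite inE.
apply/andP/set2P => [[xD /set2P[<- | vsx]] | [-> | ->]].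
- by left.
- by right; apply: inj_s; rewrite // swv vsx.
- by rewrite vD set21.
- by rewrite wD swv set22.
Qed.

Lemma sum_eq_pred (I : finType) (P : pred I) (a : I) : \sum_(i | P i) (i == a) = P a.
Proof.
case Pa: (P a); first by rewrite (bigD1 a) //= eqxx big1 // => i /andP[_ /negbTE->].
by rewrite big1 // => i Pi; case: eqP Pi Pa => // -> ->.
Qed.

Section Faults.
Variables (T : finType) (e : rel T).
Hypotheses (e_sym : symmetric e) (e_irr : irreflexive e).
Implicit Types (FV I S : {set T}) (FE : {set {set T}}).

Lemma mem_edges x y : ([set x; y] \in edges e) = e x y.
Proof.
apply/idP/idP => [|exy].
  rewrite inE => /existsP[u /existsP[w /andP[/eqP/eq_set2[[-> ->] | [-> ->]] //]]].
  by rewrite e_sym.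
by rewrite inE; apply/existsP; exists x; apply/existsP; exists y; rewrite eqxx.
Qed.

Lemma edgesP A : A \in edges e -> exists u w, A = [set u; w] /\ e u w.
Proof. by rewrite inE => /existsP[u /existsP[w /andP[/eqP-> euw]]]; exists u, w. Qed.

Definition adj_rem FV FE x y := [set x; y] \in rem_edges e FV FE.

Lemma adj_remE FV FE x y :
  adj_rem FV FE x y = [&& e x y, [set x; y] \notin FE, x \notin FV & y \notin FV].
Proof. by rewrite /adj_rem inE mem_edges disjoints_subset subUset !sub1set !inE. Qed.

Lemma rem_edges_at FV FE v A :
  A \in rem_edges e FV FE -> v \in A -> exists2 w, A = [set v; w] & adj_rem FV FE v w.
Proof.
move=> AE vA; have /setIdP[/edgesP[u [w [EA _]]] _] := AE.
move: vA AE; rewrite EA => /set2P[<- | <-] AE; first by exists w.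
by exists u; [exact: setUC | rewrite /adj_rem setUC].
Qed.

Lemma has_isolated_of_no_adj FV FE v :
  v \notin FV -> (forall w, ~~ adj_rem FV FE v w) -> has_isolated e FV FE.
Proof.
move=> vFV no_adj; exists v; split; first by rewrite inE.
by move=> A AE; apply/negP => /(rem_edges_at AE)[w _]; apply/negP.
Qed.

Lemma has_isolated_nbhd v : has_isolated e [set w | e v w] set0.
Proof.
apply: (has_isolated_of_no_adj (v := v)) => [|w]; first by rewrite inE e_irr.
by rewrite adj_remE !inE; case: (e v w); rewrite ?andbF.
Qed.

Lemma no_fpm_of_isolated (R : realFieldType) FV FE :
  has_isolated e FV FE -> ~ has_fpm R (rem_vertices FV) (rem_edges e FV FE).
Proof.
move=> [v [vV isol]] [f [_ sum1]]; have := sum1 v vV.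
rewrite big_pred0 => [/eqP | A]; first by rewrite eq_sym oner_eq0.
by apply/negbTE/andP => -[/isol/negP nvA /nvA].
Qed.

Lemma has_fpm_of_matching (R : realFieldType) FV FE s :
  matching (adj_rem FV FE) (rem_vertices FV) s ->
  has_fpm R (rem_vertices FV) (rem_edges e FV FE).
Proof.
set V' := rem_vertices FV; set E' := rem_edges e FV FE; move=> [adj_s inj_s].
have sV x : x \in V' -> s x \in V' by move/adj_s; rewrite adj_remE !inE => /and4P[].
have s_neq x : x \in V' -> s x != x.
  move/adj_s; rewrite adj_remE => /andP[exs _].
  by apply: contraTneq exs => ->; rewrite e_irr.
(* Each edge {x, s x} gets weight 1/2, counted twice when s swaps x and s x. *)
pose weight A := \sum_(x in V') (A == [set x; s x]).
have weight_le2 A : A \in E' -> weight A <= 2.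
  case/setIdP => /edgesP[u [w [EA _]]] _; rewrite EA /weight -big_mkcondr /= sum1dep_card.
  apply: leq_trans (_ : #|[set u; w]| <= 2); last by rewrite cards2; case: (u != w).
  by apply/subset_leq_card/subsetP => x; rewrite inE => /andP[_ /eqP->]; exact: set21.
exists (fun A => ((weight A)%:R / 2%:R)%R); split.
  move=> A /weight_le2 le2; rewrite divr_ge0 ?ler0n //=.
  by rewrite ler_pdivrMr ?ltr0n // mul1r ler_nat.
move=> v vV; rewrite -mulr_suml -natr_sum.
suff -> : \sum_(A in E' | v \in A) weight A = 2 by rewrite divff ?pnatr_eq0.
rewrite exchange_big /= -(card_pairs_through sV inj_s s_neq vV) -sum1dep_card big_mkcondr.
apply: eq_bigr => x xV.
by rewrite (sum_eq_pred (fun A => (A \in E') && (v \in A))) /= (adj_s x xV : _ \in E').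
Qed.

Lemma hall_deficient_of_no_fpm (R : realFieldType) FV FE :
  ~ has_fpm R (rem_vertices FV) (rem_edges e FV FE) ->
  exists2 X : {set T}, X \subset rem_vertices FV & #|nbr (adj_rem FV FE) X| < #|X|.
Proof.
move=> no_fpm; have [V0 | [x0 _]] := set_0Vmem (rem_vertices FV).
  case: no_fpm; exists (fun=> 0%R).
  by split=> [A _ | v]; [rewrite lexx ler01 | rewrite V0 inE].
case: (boolP [exists X : {set T},
  (X \subset rem_vertices FV) && (#|nbr (adj_rem FV FE) X| < #|X|)]).
  by case/exists_inP => X; exists X.
move/exists_inPn => hallV; case: no_fpm.
have [s ms] : exists s, matching (adj_rem FV FE) (rem_vertices FV) s.
  by apply: (hall x0) => X sXV; rewrite leqNgt hallV.
exact: has_fpm_of_matching ms.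
Qed.

Lemma barrier_of_no_fpm (R : realFieldType) FV FE :
  ~ has_fpm R (rem_vertices FV) (rem_edges e FV FE) ->
  exists I S, [/\ I \subset rem_vertices FV, [disjoint I & S], #|S| < #|I|
    & forall u w, u \in I -> adj_rem FV FE u w -> w \in S].
Proof.
case/hall_deficient_of_no_fpm => X XV ltNX; set N := nbr _ X in ltNX.
exists (X :\: N), (N :\: X); split.
- exact: subset_trans (subsetDl X N) XV.
- by rewrite disjoints_subset; apply/subsetP => x /setDP[xX _]; rewrite !inE xX.
- by have := cardsID N X; have := cardsID X N; rewrite setIC; lia.
- move=> u w /setDP[uX uN] adj_uw.
  have wN : w \in N := nbr_mem uX adj_uw.
  rewrite inE wN andbT; apply: contra uN => wX.
  by apply: nbr_mem wX _; rewrite /adj_rem setUC.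
Qed.

Definition induced_edges I := [set A in edges e | A \subset I].

Definition boundary I := [set w | (w \notin I) && [exists u in I, e u w]].

Lemma boundary1 v : boundary [set v] = [set w | e v w].
Proof.
apply/setP => w; rewrite !inE; apply/andP/idP => [[_ /exists_inP[u /set1P-> //]] | evw].
split; last by apply/exists_inP; exists v; rewrite ?set11.
by apply: contraTneq evw => ->; rewrite e_irr.
Qed.

Lemma fault_size_barrier FV FE I S :
  I \subset rem_vertices FV -> [disjoint I & S] ->
  (forall u w, u \in I -> adj_rem FV FE u w -> w \in S) ->
  #|induced_edges I| + #|boundary I| <= fault_size FV FE + #|S|.
Proof.
move=> IV disIS closedI.
have notFV u : u \in I -> u \notin FV by move/(subsetP IV); rewrite inE.
have cutFE u w : u \in I -> e u w -> w \notin S -> w \notin FV -> [set u; w] \in FE.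
  move=> uI euw wS wFV; have uFV := notFV u uI; apply: contraNT wS => uwFE.
  by apply: closedI uI _; rewrite adj_remE euw uwFE uFV wFV.
pose W := boundary I :\: (S :|: FV).
pose nb w := odflt w [pick u in I | e u w].
have nbP w : w \in boundary I -> nb w \in I /\ e (nb w) w.
  rewrite inE => /andP[_ /exists_inP[u uI euw]]; rewrite /nb.
  by case: pickP => [u' /andP[] | /(_ u)] //; rewrite uI euw.
have sub_in : induced_edges I \subset FE.
  apply/subsetP => A /setIdP[/edgesP[u [w [-> euw]]]].
  rewrite subUset !sub1set => /andP[uI wI].
  by apply: cutFE uI euw _ (notFV w wI); rewrite (disjointFr disIS wI).
have sub_cut : [set [set nb w; w] | w in W] \subset FE.
  apply/subsetP => A /imsetP[w /setDP[wB]]; rewrite !inE negb_or => /andP[wS wFV] ->.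
  by have [nbI enbw] := nbP w wB; apply: cutFE.
have dis : [disjoint induced_edges I & [set [set nb w; w] | w in W]].
  rewrite disjoint_sym disjoints_subset; apply/subsetP => A /imsetP[w /setDP[wB _] ->].
  move: wB; rewrite !inE subUset !sub1set => /andP[/negbTE-> _].
  by rewrite !andbF.
have inj : {in W &, injective (fun w => [set nb w; w])}.
  move=> w w' /setDP[wB _] /setDP[w'B _] /eq_set2[[_ //] | [nbw _]].
  by move: w'B (nbP w wB).1; rewrite nbw inE => /andP[/negbTE->].
have := subset_leq_card (_ : induced_edges I :|: [set [set nb w; w] | w in W] \subset FE).
rewrite subUset sub_in sub_cut cardsU (disjoint_setI0 dis) cards0 subn0 card_in_imset //.
move=> /(_ isT).
have := cardsID (S :|: FV) (boundary I); have := (leq_card_setU S FV).1.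
have := subset_leq_card (subsetIr (boundary I) (S :|: FV)).
rewrite -/W /fault_size; lia.
Qed.

Lemma card_induced_edges (rank : T -> nat) I : injective rank ->
  #|induced_edges I| =
  #|[set p : T * T | [&& p.1 \in I, p.2 \in I, e p.1 p.2 & rank p.1 < rank p.2]]|.
Proof.
move=> rank_inj; rewrite -(@card_in_imset _ _ (fun p : T * T => [set p.1; p.2])); last first.
  move=> [x y] [u w]; rewrite !inE /= => /and4P[_ _ _ xy] /and4P[_ _ _ uw].
  case/eq_set2 => [[-> ->] // | [ex ey]].
  by exfalso; move: xy uw; rewrite ex ey; lia.
apply: eq_card => A; rewrite inE.
apply/andP/imsetP => [[/edgesP[u [w [-> euw]]]] | [[x y]]]; last first.
  by rewrite inE /= => /and4P[xI yI exy _] ->; rewrite mem_edges exy subUset !sub1set xI yI.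
rewrite subUset !sub1set => /andP[uI wI].
have [ltuw | ltwu | equw] := ltngtP (rank u) (rank w).
- by exists (u, w); rewrite // inE /= uI wI euw.
- by exists (w, u); [rewrite inE /= uI wI e_sym euw | apply: setUC].
- by move: euw; rewrite (rank_inj _ _ equw) e_irr.
Qed.

End Faults.

Lemma card_count (T : finType) (s : seq T) (A : {pred T}) :
  uniq s -> (forall x, x \in s) -> #|A| = count (mem A) s.
Proof.
move=> s_uniq s_all; rewrite cardE /enum_mem size_filter.
suff /permP-> : perm_eq (Finite.enum T) s by [].
by apply: uniq_perm (s_uniq) _ => [|x]; rewrite -?enumT ?enum_uniq // mem_enum s_all.
Qed.

Fixpoint bool_tuples (n : nat) : seq (n.-tuple bool) :=
  if n is n'.+1 then [seq cons_tuple b t | b <- [:: false; true], t <- bool_tuples n']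
  else [:: [tuple]].

Lemma mem_bool_tuples n (t : n.-tuple bool) : t \in bool_tuples n.
Proof.
elim: n t => [|n IH] t; first by rewrite tuple0 inE.
by case/tupleP: t => b t; apply/allpairsP; exists (b, t); rewrite /= IH; case: b.
Qed.

Lemma bool_tuples_uniq n : uniq (bool_tuples n).
Proof.
elim: n => [|n IH] //; apply: allpairs_uniq => // -[b t] [b' t'] _ _.
by move=> /(congr1 val) [-> /val_inj->].
Qed.

Section ExpansionCheck.
Variables (T : finType) (e : rel T) (vs : seq T).
Hypotheses (e_sym : symmetric e) (e_irr : irreflexive e).
Hypotheses (vs_uniq : uniq vs) (mem_vs : forall x, x \in vs).

Definition edge_positions : seq (nat * nat) :=
  [seq (index p.1 vs, index p.2 vs) | p <- [seq (x, y) | x <- vs, y <- vs]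
     & e p.1 p.2 && (index p.1 vs < index p.2 vs)].

Definition nbr_positions : seq (nat * seq nat) :=
  [seq (index w vs, [seq index u vs | u <- vs & e u w]) | w <- vs].

(* Vertices are encoded by their positions in [vs] and vertex sets by bit lists;
   [E] and [N] are let-bound so that they are computed only once. *)
Definition expansion_check (k : nat) : bool :=
  let E := edge_positions in let N := nbr_positions in
  all (fun L => (1 < count id L) ==>
         (count id L + k <= count (fun ij => nth false L ij.1 && nth false L ij.2) E
            + count (fun wN => ~~ nth false L wN.1 && has (nth false L) wN.2) N))
      [seq val t | t <- bool_tuples (size vs)].

Lemma expansion_checkP k : expansion_check k ->
  forall I : {set T}, 1 < #|I| -> #|I| + k <= #|induced_edges e I| + #|boundary e I|.
Proof.
move=> check I ltI1; pose L := [seq x \in I | x <- vs].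
have nthL x : nth false L (index x vs) = (x \in I).
  by rewrite (nth_map x) ?nth_index ?index_mem.
have countL : count id L = #|I| by rewrite count_map (card_count _ vs_uniq mem_vs).
have pairs_uniq : uniq [seq (x, y) | x <- vs, y <- vs].
  by apply: allpairs_uniq => // -[? ?] [? ?].
have mem_pairs p : p \in [seq (x, y) | x <- vs, y <- vs] by case: p => x y; apply: allpairs_f.
have countE : count (fun ij => nth false L ij.1 && nth false L ij.2) edge_positions
              = #|induced_edges e I|.
  rewrite (card_induced_edges e_sym e_irr _ (rank := index^~ vs)); last first.
    by move=> x y /(index_inj x (mem_vs x) (mem_vs y)).
  rewrite (card_count _ pairs_uniq mem_pairs) count_map count_filter.
  by apply: eq_count => -[x y]; rewrite !inE /= !nthL -andbA.
have countN : count (fun wN => ~~ nth false L wN.1 && has (nth false L) wN.2) nbr_positions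
              = #|boundary e I|.
  rewrite (card_count _ vs_uniq mem_vs) count_map; apply: eq_count => w.
  rewrite !inE /= nthL has_map; congr (_ && _).
  apply/hasP/exists_inP => [[u] | [u uI euw]].
    by rewrite mem_filter /= nthL => /andP[euw _]; exists u.
  by exists u; rewrite /= ?nthL // mem_filter euw mem_vs.
have := allP check L (map_f val (mem_bool_tuples (map_tuple (mem I) (in_tuple vs)))).
by rewrite countL countE countN ltI1.
Qed.

End ExpansionCheck.

Lemma aq_adj_sym : symmetric aq_adj.
Proof.
elim=> [|a u IH] [|b v] //=.
rewrite [a == b]eq_sym IH [u == v]eq_sym.
by rewrite -(can2_eq (mapK negbK) (mapK negbK)) [_ == v]eq_sym.
Qed.

Lemma aq_adj_irr : irreflexive aq_adj.
Proof. by elim=> //= a u ->; rewrite eqxx. Qed.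

Lemma AQ_sym n : symmetric (@AQ n).
Proof. by move=> u v; apply: aq_adj_sym. Qed.

Lemma AQ_irr n : irreflexive (@AQ n).
Proof. by move=> u; apply: aq_adj_irr. Qed.

Lemma AQ4_regular v : #|[set w | @AQ 4 v w]| = 7.
Proof.
have : all (fun v => count (@AQ 4 v) (bool_tuples 4) == 7) (bool_tuples 4) by vm_compute.
move/allP/(_ v (mem_bool_tuples v))/eqP <-.
rewrite (card_count _ (bool_tuples_uniq 4) (@mem_bool_tuples 4)).
by apply: eq_count => w; rewrite /= inE.
Qed.

Lemma AQ4_expansion_check : expansion_check (@AQ 4) (bool_tuples 4) 7.
Proof. by vm_compute. Qed.

(* With [{set _}], [#|I|] elaborates to the same term as in [AQ4_fsmp_set_size],
   which [lia] needs. *)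
Lemma AQ4_expansion (I : {set _}) : 1 < #|I| ->
  #|I| + 7 <= #|induced_edges (@AQ 4) I| + #|boundary (@AQ 4) I|.
Proof.
move=> ltI1; exact: (expansion_checkP (@AQ_sym 4) (@AQ_irr 4) (bool_tuples_uniq 4)
  (@mem_bool_tuples 4) AQ4_expansion_check ltI1).
Qed.

Lemma AQ4_fsmp_set_size (R : realFieldType) FV FE : is_fsmp_set (@AQ 4) R FV FE ->
  7 <= fault_size FV FE /\ (fault_size FV FE <= 7 -> has_isolated (@AQ 4) FV FE).
Proof.
case=> _ /(barrier_of_no_fpm (@AQ_sym 4) (@AQ_irr 4)) [I [S [IV disIS ltSI closedI]]].
have bound := fault_size_barrier (@AQ_sym 4) IV disIS closedI.
have [ltI1 | leI1] := ltnP 1 #|I|.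
  by have := AQ4_expansion ltI1; split=> [|le7]; [lia | exfalso; lia].
have S0 : S = set0 by apply/eqP; rewrite -cards_eq0; lia.
have /cards1P[v Iv] : #|I| == 1 by apply/eqP; lia.
split=> [|_].
  by move: bound; rewrite Iv (boundary1 (@AQ_irr 4)) AQ4_regular S0 cards0; lia.
apply: (has_isolated_of_no_adj (v := v)) => [|w].
  by have := subsetP IV v; rewrite Iv set11 inE => /(_ isT).
by apply/negP => /(closedI v w); rewrite Iv set11 S0 inE => /(_ isT).
Qed.

Theorem lemma4p1 (R : realFieldType) :
  fsmp_is (@AQ 4) R 7 /\
  (forall (FV : {set 4.-tuple bool}) (FE : {set {set 4.-tuple bool}}),
      is_fsmp_set (@AQ 4) R FV FE -> fault_size FV FE = 7 ->
      has_isolated (@AQ 4) FV FE).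
Proof.
pose v0 : 4.-tuple bool := [tuple of nseq 4 false].
have nbhd_fsmp : is_fsmp_set (@AQ 4) R [set w | @AQ 4 v0 w] set0.
  split; first exact: sub0set.
  exact: no_fpm_of_isolated (has_isolated_nbhd (@AQ_sym 4) (@AQ_irr 4) v0).
split; first split.
- by exists [set w | @AQ 4 v0 w], set0; rewrite /fault_size AQ4_regular cards0.
- by move=> FV FE /AQ4_fsmp_set_size[].
- by move=> FV FE /AQ4_fsmp_set_size[_ isolated] size7; apply: isolated; rewrite size7.
Qed.
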